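(* Let $A$ be the symmetric circulant $5\times5$ matrix with first row $(8,5,1,1,5)$ (i.e. $a_{ii}=8$, $a_{ij}=5$ if $j\equiv i\pm1 \pmod 5$, $a_{ij}=1$ otherwise), and let $A'$ be the symmetric circulant $5\times 5$ matrix with first row $(6,4,1,1,4)$. Then $A$ is completely positive, has exactly two minimal CP factorizations, and has infinitely many CP factorizations; and $A'$ is completely positive with the unique CP factorization $A'=W^2(W^2)^T$, where $W$ is the $5\times5$ matrix whose $i$-th column is $\mathbf e_i+\mathbf e_{i\oplus1}$ ($\oplus$ denoting addition modulo $5$ on $\{1,\dots,5\}$), so that $W^2$ is the circulant matrix with first row $(1,0,0,1,2)$.
   Context: A symmetric $n\times n$ matrix $A$ is completely positive if $A=BB^T$ for some entrywise nonnegative $n\times k$ matrix $B$; such an equality is a CP factorization of $A$. Only CP factorizations in which the columns of $B$ are pairwise linearly independent are considered, and two CP factorizations $A=BB^T=CC^T$ are considered equal if $C=BP$ for a permutation matrix $P$. The cp-rank of $A$ is the minimal number of columns of such a nonnegative $B$; a CP factorization with that many columns is called minimal. $\mathbf e_1,\dots,\mathbf e_5$ are the standard basis vectors of $\mathbb R^5$. *)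

From HB Require Import structures.
From mathcomp Require Import all_boot all_order all_algebra all_fingroup.
From mathcomp Require Import reals.
Set Implicit Arguments. Unset Strict Implicit. Unset Printing Implicit Defensive.
Import Order.TTheory GRing.Theory Num.Theory.
Local Open Scope ring_scope.

Section CP.
Variable R : realType.

Definition nonneg_mx m k (B : 'M[R]_(m, k)) : Prop := forall i j, 0 <= B i j.

Definition lin_indep2 m (u v : 'cV[R]_m) : Prop :=
  forall a b : R, a *: u + b *: v = 0 -> a = 0 /\ b = 0.

Definition completely_positive n (A : 'M[R]_n) : Prop :=
  exists k (B : 'M[R]_(n, k)), nonneg_mx B /\ A = B *m B^T.

Definition cp_factorization n k (A : 'M[R]_n) (B : 'M[R]_(n, k)) : Prop :=
  [/\ nonneg_mx B,
      (forall j1 j2 : 'I_k, j1 != j2 -> lin_indep2 (col j1 B) (col j2 B))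
    & A = B *m B^T].

Definition minimal_cp_factorization n k (A : 'M[R]_n) (B : 'M[R]_(n, k)) : Prop :=
  cp_factorization A B /\
  (forall k' (B' : 'M[R]_(n, k')), nonneg_mx B' -> A = B' *m B'^T -> (k <= k')%N).

Definition cp_equiv n k k' (B : 'M[R]_(n, k)) (C : 'M[R]_(n, k')) : Prop :=
  exists e : k = k', exists s : 'S_k', C = castmx (erefl n, e) B *m perm_mx s.

Definition fact_of n := {k : nat & 'M[R]_(n, k)}.

Definition fequiv n (F G : fact_of n) : Prop := cp_equiv (projT2 F) (projT2 G).

(* 5x5 circulant matrix with first row r = (r_0,...,r_4) *)
Definition circ5 (r : seq R) : 'M[R]_5 :=
  \matrix_(i < 5, j < 5) r`_(((nat_of_ord j + 5 - nat_of_ord i) %% 5)%N).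

Definition W5 : 'M[R]_5 :=
  \matrix_(i < 5, j < 5) ((nat_of_ord i == nat_of_ord j)%:R + ((nat_of_ord i == ((nat_of_ord j).+1 %% 5)%N)%:R)).

End CP.

From HB Require Import structures.
From mathcomp Require Import all_boot all_order all_algebra all_fingroup.
From mathcomp Require Import reals ring lra.
Import Order.TTheory GRing.Theory Num.Theory.
Local Open Scope ring_scope.

Set Implicit Arguments. Unset Strict Implicit. Unset Printing Implicit Defensive.

(* Both matrices are circulants circ(2e-2, e, 1, 1, e), with e = 5 for A and
   e = 4 for A'.  The proof follows the Horn-matrix argument:
   - the Horn form is copositive and its nonnegative zeros are exactly the
     vectors hvec t a b = (a, a+b, b) supported on three cyclically
     consecutive indices t, t+1, t+2 (the "type" t);
   - pairing B B^T = circ(2e-2, e, 1, 1, e) with the Horn matrix gives 0, so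
     every column of a nonnegative factor B is such a Horn zero; reading the
     entries (m, m+2) and (m, m+1) of B B^T then gives, for every type m,
     sum a b = 1 and sum_m a^2 + sum_(m-1) b^2 = e - 2 (factor_structure);
   - for A this forces every type to occur (cp-rank 5), and for 5 columns a
     cyclic system whose only solutions are (phi, psi) and (psi, phi), giving
     the two minimal factorizations; row blocks [u F1, v F2] with
     u^2 + v^2 = 1 give infinitely many non-minimal ones;
   - for A' a sum-of-squares count forces a = b in every column, then
     pairwise independence leaves exactly the columns of W^2. *)

Definition nxt (t : nat) : nat := if t == 4%N then 0%N else t.+1.
Definition nxt2 (t : nat) : nat := nxt (nxt t).
Definition prv (t : nat) : nat := nxt (nxt (nxt (nxt t))).

Lemma nxt_lt t : (t < 5)%N -> [/\ (nxt t < 5)%N, (nxt2 t < 5)%N & (prv t < 5)%N].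
Proof. by case: t => [|[|[|[|[|t]]]]]. Qed.

Section HornForm.
Variable R : realFieldType.

(* The Horn form x^T H x, where H is the circulant with first row
   (1, -1, 1, 1, -1). *)
Definition horn5 (a b c d e : R) : R :=
  a * a + b * b + c * c + d * d + e * e
  - 2 * (a * b + b * c + c * d + d * e + e * a)
  + 2 * (a * c + b * d + c * e + d * a + e * b).

(* Copositivity of the Horn form and description of its nonnegative zeros,
   under the normalisation e <= d: the identity
   horn5 = (a-b+c-d+e)^2 + 4a(d-e) + 4be writes it as a sum of nonnegative
   terms. *)
Lemma horn5_zero_cases a b c d e :
  0 <= a -> 0 <= b -> 0 <= c -> 0 <= d -> 0 <= e -> e <= d ->
  0 <= horn5 a b c d e /\ (horn5 a b c d e = 0 ->
   [\/ [/\ d = 0, e = 0 & b = a + c],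
       [/\ e = 0, a = 0 & c = b + d],
       [/\ a = 0, b = 0 & d = c + e] |
       [/\ b = 0, c = 0 & e = d + a]]).
Proof.
move=> ha hb hc hd he hed.
have -> : horn5 a b c d e = (a - b + c - d + e) ^+ 2 + 4 * a * (d - e) + 4 * b * e.
  by rewrite /horn5; ring.
have h1 : 0 <= (a - b + c - d + e) ^+ 2 by apply: sqr_ge0.
have h2 : 0 <= 4 * a * (d - e) by rewrite mulr_ge0 ?mulr_ge0 // subr_ge0.
have h3 : 0 <= 4 * b * e by rewrite mulr_ge0 ?mulr_ge0.
split=> [|h0]; first lra.
have : (a - b + c - d + e) ^+ 2 == 0 by apply/eqP; lra.
rewrite sqrf_eq0 => /eqP e1.
have /eqP : 4 * a * (d - e) = 0 by lra.
have /eqP : 4 * b * e = 0 by lra.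
rewrite !mulf_eq0 => /orP[/orP[/eqP|/eqP]|/eqP] e3 /orP[/orP[/eqP|/eqP]|/eqP] e2;
  try lra.
- by apply: Or43; split; lra.
- by apply: Or44; split; lra.
- by apply: Or42; split; lra.
- by apply: Or41; split; lra.
Qed.

Definition hornq (x : nat -> R) : R := horn5 (x 0%N) (x 1%N) (x 2%N) (x 3%N) (x 4%N).

Definition horn_zero_at (x : nat -> R) (t : 'I_5) : bool :=
  [&& x (nxt (nxt2 t)) == 0, x (prv t) == 0 & x (nxt t) == x t + x (nxt2 t)].

Ltac zero_type t := exists (@Ordinal 5 t isT); by apply/and3P; split; apply/eqP.
Ltac find_zero_type :=
  first [ zero_type 0%N | zero_type 1%N | zero_type 2%N | zero_type 3%N | zero_type 4%N ].

Lemma horn5_rot a b c d e : horn5 a b c d e = horn5 b c d e a.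
Proof. by rewrite /horn5; ring. Qed.

(* Some cyclic rotation of x satisfies the normalisation of
   [horn5_zero_cases], since x_4 < x_3 < x_2 < x_1 < x_0 < x_4 is absurd. *)
Lemma horn_copositive (x : nat -> R) : (forall i, (i < 5)%N -> 0 <= x i) ->
  0 <= hornq x /\ (hornq x = 0 -> exists t, horn_zero_at x t).
Proof.
move=> hx.
have h0 := hx 0%N isT; have h1 := hx 1%N isT; have h2 := hx 2%N isT.
have h3 := hx 3%N isT; have h4 := hx 4%N isT.
rewrite /hornq.
have [c|c] := lerP (x 4%N) (x 3%N).
  have [hq hz] := horn5_zero_cases h0 h1 h2 h3 h4 c.
  by split=> // /hz; case=> -[? ? ?]; find_zero_type.
rewrite horn5_rot.
have [c1|c1] := lerP (x 0%N) (x 4%N).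
  have [hq hz] := horn5_zero_cases h1 h2 h3 h4 h0 c1.
  by split=> // /hz; case=> -[? ? ?]; find_zero_type.
rewrite horn5_rot.
have [c2|c2] := lerP (x 1%N) (x 0%N).
  have [hq hz] := horn5_zero_cases h2 h3 h4 h0 h1 c2.
  by split=> // /hz; case=> -[? ? ?]; find_zero_type.
rewrite horn5_rot.
have [c3|c3] := lerP (x 2%N) (x 1%N).
  have [hq hz] := horn5_zero_cases h3 h4 h0 h1 h2 c3.
  by split=> // /hz; case=> -[? ? ?]; find_zero_type.
rewrite horn5_rot.
have [c4|c4] := lerP (x 3%N) (x 2%N).
  have [hq hz] := horn5_zero_cases h4 h0 h1 h2 h3 c4.
  by split=> // /hz; case=> -[? ? ?]; find_zero_type.
lra.
Qed.

Definition hvec (t : nat) (a b : R) (i : nat) : R :=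
  if i == t then a else if i == nxt t then a + b else if i == nxt2 t then b else 0.

Lemma horn_zero_hvec x (t : 'I_5) : horn_zero_at x t -> forall i, (i < 5)%N ->
  x i = hvec t (x t) (x (nxt2 t)) i.
Proof.
case/and3P=> /eqP e3 /eqP e4 /eqP e1.
case: t e3 e4 e1 => [[|[|[|[|[|t]]]]] //= ht] e3 e4 e1;
by case=> [|[|[|[|[|i]]]]] //= _; rewrite /hvec /=.
Qed.

Lemma hvec_ge0 t (a b : R) i : 0 <= a -> 0 <= b -> 0 <= hvec t a b i.
Proof.
move=> ha hb; rewrite /hvec; case: ifP => _ //; case: ifP => _; first exact: addr_ge0.
by case: ifP.
Qed.

Lemma hvec_scale t (c a b : R) i : hvec t (c * a) (c * b) i = c * hvec t a b i.
Proof. by rewrite /hvec; do 3?case: ifP => _; ring. Qed.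

Lemma hvec_first t (a b : R) : hvec t a b t = a.
Proof. by rewrite /hvec eqxx. Qed.

Lemma hvec_last t (a b : R) : (t < 5)%N -> hvec t a b (nxt2 t) = b.
Proof. by case: t => [|[|[|[|[|t]]]]]. Qed.

Lemma hvec_out t (a b : R) r : r \notin [:: t; nxt t; nxt2 t] -> hvec t a b r = 0.
Proof.
rewrite !inE !negb_or => /and3P[h1 h2 h3].
by rewrite /hvec (negbTE h1) (negbTE h2) (negbTE h3).
Qed.

Lemma hvec_mul2 (t : nat) (a b : R) m : (t < 5)%N -> (m < 5)%N ->
  hvec t a b m * hvec t a b (nxt2 m) = (if t == m then a * b else 0).
Proof.
by case: t => [|[|[|[|[|t]]]]] //= _; case: m => [|[|[|[|[|m]]]]] //= _;
  rewrite /hvec /=; ring.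
Qed.

Lemma hvec_mul1 (t : nat) (a b : R) m : (t < 5)%N -> (m < 5)%N ->
  hvec t a b m * hvec t a b (nxt m) =
  (if t == m then a ^+ 2 + a * b else 0) + (if t == prv m then a * b + b ^+ 2 else 0).
Proof.
by case: t => [|[|[|[|[|t]]]]] //= _; case: m => [|[|[|[|[|m]]]]] //= _;
  rewrite /hvec /=; ring.
Qed.

End HornForm.

Section CyclicSystem.
Variable R : realFieldType.

Lemma recip_sq_lt (x y x' y' : R) : 0 <= x -> 0 <= y -> 0 <= x' -> 0 <= y' ->
  x * y = 1 -> x' * y' = 1 -> x ^+ 2 < x' ^+ 2 -> y' ^+ 2 < y ^+ 2.
Proof.
move=> hx hy hx' hy' e e' h.
have lx : x < x' by rewrite -(@ltr_pXn2r _ 2) ?nnegrE.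
have py' : 0 < y'.
  by rewrite lt_def hy' andbT; apply/eqP => y0; move: e'; rewrite y0 mulr0; lra.
have ly : y' < y.
  rewrite ltNge; apply/negP => hle.
  have h1 : x * y <= x * y' by apply: ler_wpM2l.
  have h2 : x * y' < x' * y' by rewrite ltr_pM2r.
  lra.
by rewrite ltrXn2r.
Qed.

Lemma recip_sq_eq (x y x' y' : R) : 0 <= x -> 0 <= y -> 0 <= x' -> 0 <= y' ->
  x * y = 1 -> x' * y' = 1 -> x ^+ 2 = x' ^+ 2 -> x = x' /\ y = y'.
Proof.
move=> hx hy hx' hy' e e' /eqP h.
have ex : x = x' by apply/eqP; rewrite -(eqrXn2 (isT : (0 < 2)%N) hx hx').
subst x'; split=> //.
have : x * (y - y') = 0 by rewrite mulrBr e e' subrr.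
move/eqP; rewrite mulf_eq0 => /orP[/eqP x0|]; last by rewrite subr_eq0 => /eqP.
by move: e; rewrite x0 mul0r; lra.
Qed.

(* The only nonnegative solutions of the cyclic system
   a_i b_i = 1, a_(i+1)^2 + b_i^2 = 3 (i mod 5) are constant: if a_0^2 and
   a_1^2 differed, the squares a_i^2 would be strictly monotone all around
   the cycle. *)
Lemma cyclic_system_const (a b : nat -> R) :
  (forall i, (i < 5)%N -> [/\ 0 <= a i, 0 <= b i & a i * b i = 1]) ->
  (forall i, (i < 5)%N -> a (nxt i) ^+ 2 + b i ^+ 2 = 3) ->
  forall i, (i < 5)%N -> a i = a 0%N /\ b i = b 0%N.
Proof.
move=> hp hr.
have up i : (i < 5)%N -> a i ^+ 2 < a (nxt i) ^+ 2 -> a (nxt i) ^+ 2 < a (nxt2 i) ^+ 2.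
  move=> hi h; have [h1 _ _] := nxt_lt hi.
  have [p1 p2 p3] := hp i hi; have [q1 q2 q3] := hp _ h1.
  have := recip_sq_lt p1 p2 q1 q2 p3 q3 h.
  by have := hr _ hi; have := hr _ h1; rewrite /nxt2; lra.
have dn i : (i < 5)%N -> a (nxt i) ^+ 2 < a i ^+ 2 -> a (nxt2 i) ^+ 2 < a (nxt i) ^+ 2.
  move=> hi h; have [h1 _ _] := nxt_lt hi.
  have [p1 p2 p3] := hp i hi; have [q1 q2 q3] := hp _ h1.
  have := recip_sq_lt q1 q2 p1 p2 q3 p3 h.
  by have := hr _ hi; have := hr _ h1; rewrite /nxt2; lra.
have e01 : a 0%N ^+ 2 = a 1%N ^+ 2.
  case: (ltrgtP (a 0%N ^+ 2) (a 1%N ^+ 2)) => // c.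
    have c1 := up 0%N isT c; have c2 := up 1%N isT c1; have c3 := up 2%N isT c2.
    by have := up 3%N isT c3; move: c1 c2 c3; rewrite /nxt2 /nxt /=; lra.
  have c1 := dn 0%N isT c; have c2 := dn 1%N isT c1; have c3 := dn 2%N isT c2.
  by have := dn 3%N isT c3; move: c1 c2 c3; rewrite /nxt2 /nxt /=; lra.
have step i : (i < 5)%N -> a i ^+ 2 = a (nxt i) ^+ 2 ->
    [/\ a i = a (nxt i), b i = b (nxt i) & a (nxt i) ^+ 2 = a (nxt2 i) ^+ 2].
  move=> hi h; have [h1 _ _] := nxt_lt hi.
  have [p1 p2 p3] := hp i hi; have [q1 q2 q3] := hp _ h1.
  have [ea eb] := recip_sq_eq p1 p2 q1 q2 p3 q3 h.
  by split=> //; have := hr _ hi; have := hr _ h1; rewrite /nxt2 -eb; lra.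
have [a1 b1 e12] := step 0%N isT e01.
have [a2 b2 e23] := step 1%N isT e12.
have [a3 b3 e34] := step 2%N isT e23.
have [a4 b4 _] := step 3%N isT e34.
move: a1 b1 a2 b2 a3 b3 a4 b4; rewrite /nxt /= => a1 b1 a2 b2 a3 b3 a4 b4.
by case=> [|[|[|[|[|i]]]]] //= _; split; lra.
Qed.

End CyclicSystem.

Section GoldenRatio.
Variable R : rcfType.

Definition phi : R := (Num.sqrt 5 + 1) / 2.
Definition psi : R := (Num.sqrt 5 - 1) / 2.

Lemma golden_facts :
  [/\ phi * psi = 1, phi ^+ 2 + psi ^+ 2 = 3, 0 < psi, 0 < phi & phi - psi = 1].
Proof.
have h5 : Num.sqrt 5 * Num.sqrt 5 = 5 :> R by rewrite -expr2 sqr_sqrtr //; lra.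
have h0 : 0 <= Num.sqrt 5 :> R by apply: sqrtr_ge0.
have h2 : 2 < Num.sqrt 5 :> R by nra.
by rewrite /phi /psi !expr2; split; lra.
Qed.

(* The nonnegative solutions of a b = 1, a^2 + b^2 = 3 are (phi, psi) and
   (psi, phi): they force a + b = sqrt 5 and a - b = +-1. *)
Lemma golden_pair_cases (a b : R) : 0 <= a -> 0 <= b -> a * b = 1 -> a ^+ 2 + b ^+ 2 = 3 ->
  (a = phi /\ b = psi) \/ (a = psi /\ b = phi).
Proof.
move=> ha hb e s.
have h5 : Num.sqrt 5 ^+ 2 = 5 :> R by rewrite sqr_sqrtr //; lra.
have h0 : 0 <= Num.sqrt 5 :> R by apply: sqrtr_ge0.
have hsum : a + b = Num.sqrt 5.
  have : (a + b - Num.sqrt 5) * (a + b + Num.sqrt 5) = 0.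
    have -> : (a + b - Num.sqrt 5) * (a + b + Num.sqrt 5) =
      (a ^+ 2 + b ^+ 2) + 2 * (a * b) - Num.sqrt 5 ^+ 2 by ring.
    by rewrite s e h5; ring.
  by move/eqP; rewrite mulf_eq0 => /orP[/eqP h|/eqP h]; lra.
have : (a - b - 1) * (a - b + 1) = 0.
  have -> : (a - b - 1) * (a - b + 1) = (a ^+ 2 + b ^+ 2) - 2 * (a * b) - 1 by ring.
  by rewrite s e; ring.
rewrite /phi /psi.
by move/eqP; rewrite mulf_eq0 => /orP[/eqP h|/eqP h]; [left|right]; split; lra.
Qed.

End GoldenRatio.

Section Factorizations.
Variable R : realType.

Lemma circ5_entry (d e : R) i l : (i < 5)%N -> (l < 5)%N ->
  circ5 [:: d; e; 1; 1; e] (inord i) (inord l) =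
  (if i == l then d else if (l == nxt i) || (i == nxt l) then e else 1).
Proof.
move=> hi hl; rewrite mxE !inordK //.
by case: i hi => [|[|[|[|[|i]]]]] //= _; case: l hl => [|[|[|[|[|l]]]]].
Qed.

Variables (k : nat) (B : 'M[R]_(5, k)).

Definition colx (j : 'I_k) (i : nat) : R := B (inord i) j.

Lemma colxE j (i : 'I_5) : colx j i = B i j.
Proof. by rewrite /colx inord_val. Qed.

Lemma gram_entry i l : \sum_j colx j i * colx j l = (B *m B^T) (inord i) (inord l).
Proof. by rewrite mxE; apply: eq_bigr => j _; rewrite mxE. Qed.

(* Pairing the Gram matrix with the Horn matrix: the Horn values of the
   columns sum to 5d - 10e + 10. *)
Lemma sum_hornq_cols (d e : R) : B *m B^T = circ5 [:: d; e; 1; 1; e] ->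
  \sum_j hornq (colx j) = 5 * d - 10 * e + 10.
Proof.
move=> hB; rewrite /hornq /horn5.
rewrite !big_split /= sumrN -!mulr_sumr !big_split /= !gram_entry hB !circ5_entry //=.
lra.
Qed.

(* When d = 2e - 2, the pairing vanishes, so by copositivity every column
   of a nonnegative factor is a Horn zero. *)
Lemma cols_horn_zero (e : R) : nonneg_mx B ->
  B *m B^T = circ5 [:: 2 * e - 2; e; 1; 1; e] -> forall j, hornq (colx j) = 0.
Proof.
move=> hnn hB.
have hsum : \sum_j hornq (colx j) = 0 by rewrite (sum_hornq_cols hB); lra.
have hge j : 0 <= hornq (colx j).
  by case: (horn_copositive (x := colx j)) => // i _; apply: hnn.
by move=> j; move/psumr_eq0P: hsum => ->.
Qed.

Definition col_type (j : 'I_k) : nat :=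
  if [pick t | horn_zero_at (colx j) t] is Some t then nat_of_ord t else 0%N.
Definition col_a (j : 'I_k) : R := colx j (col_type j).
Definition col_b (j : 'I_k) : R := colx j (nxt2 (col_type j)).

Definition mass_ab (m : nat) : R := \sum_j (if col_type j == m then col_a j * col_b j else 0).
Definition mass_aa (m : nat) : R := \sum_j (if col_type j == m then col_a j ^+ 2 else 0).
Definition mass_bb (m : nat) : R := \sum_j (if col_type j == m then col_b j ^+ 2 else 0).

Lemma col_hvec j : (forall i, (i < 5)%N -> 0 <= colx j i) -> hornq (colx j) = 0 ->
  (col_type j < 5)%N /\
  forall i, (i < 5)%N -> colx j i = hvec (col_type j) (col_a j) (col_b j) i.
Proof.
move=> hnn hq; rewrite /col_a /col_b /col_type.
case: pickP => [t ht|hn]; first by split=> //; apply: horn_zero_hvec.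
have [_ /(_ hq) [t ht]] := horn_copositive hnn.
by move: (hn t); rewrite ht.
Qed.

(* Reading the entries (m, m+2) and (m, m+1) of B B^T off a factor whose
   columns are Horn zeros. *)
Lemma type_masses (d e : R) :
  (forall j, (col_type j < 5)%N) ->
  (forall j i, (i < 5)%N -> colx j i = hvec (col_type j) (col_a j) (col_b j) i) ->
  B *m B^T = circ5 [:: d; e; 1; 1; e] ->
  forall m, (m < 5)%N -> mass_ab m = 1 /\ mass_aa m + mass_bb (prv m) = e - 2.
Proof.
move=> hty hx hB.
have hP m : (m < 5)%N -> mass_ab m = 1.
  move=> hm; have [_ h2 _] := nxt_lt hm.
  have eP : \sum_j colx j m * colx j (nxt2 m) = mass_ab m.
    by apply: eq_bigr => j _; rewrite !hx // hvec_mul2.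
  rewrite gram_entry hB circ5_entry // in eP.
  by rewrite -eP; case: m hm {h2 eP} => [|[|[|[|[|m]]]]].
move=> m hm; have [h1 _ h4] := nxt_lt hm.
split; first exact: hP.
have eS : \sum_j colx j m * colx j (nxt m) =
    mass_aa m + mass_ab m + mass_ab (prv m) + mass_bb (prv m).
  rewrite /mass_aa /mass_ab /mass_bb -!big_split /=.
  apply: eq_bigr => j _; rewrite !hx // hvec_mul1 //.
  by do 2!case: ifP => _; ring.
rewrite gram_entry hB circ5_entry // !hP // in eS.
by move: eS; case: m hm {h1 h4} => [|[|[|[|[|m]]]]] //= _ hS; lra.
Qed.

Lemma factor_structure (e : R) :
  nonneg_mx B -> B *m B^T = circ5 [:: 2 * e - 2; e; 1; 1; e] ->
  [/\ forall j, (col_type j < 5)%N,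
      forall j i, (i < 5)%N -> colx j i = hvec (col_type j) (col_a j) (col_b j) i,
      forall j, 0 <= col_a j /\ 0 <= col_b j &
      forall m, (m < 5)%N -> mass_ab m = 1 /\ mass_aa m + mass_bb (prv m) = e - 2].
Proof.
move=> hnn hB.
have hcol j := col_hvec (fun i _ => hnn _ _) (cols_horn_zero hnn hB j).
have hty j : (col_type j < 5)%N by case: (hcol j).
have hx j : forall i, (i < 5)%N -> colx j i = hvec (col_type j) (col_a j) (col_b j) i.
  by case: (hcol j).
split=> //; first by move=> j; split; apply: hnn.
exact: type_masses hty hx hB.
Qed.

End Factorizations.

Section Counting.
Variable R : realType.

Lemma type_occurs k (B : 'M[R]_(5, k)) m : mass_ab B m = 1 -> exists j, col_type B j = m.
Proof.
move=> hP; case: (pickP (fun j => col_type B j == m)) => [j /eqP hj|hn]; first by exists j.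
move: hP; rewrite /mass_ab big1 => [|j _]; last by rewrite hn.
by move/eqP; rewrite eq_sym oner_eq0.
Qed.

Lemma card_ge5 k (ty : 'I_k -> nat) :
  (forall m, (m < 5)%N -> exists j, ty j = m) -> (5 <= k)%N.
Proof.
move=> hh.
have := @uniq_leq_size _ (iota 0 5) [seq ty j | j <- enum 'I_k] (iota_uniq 0 5).
rewrite size_map size_enum_ord size_iota; apply => m; rewrite mem_iota add0n => /andP[_ hm].
by have [j hj] := hh m hm; apply/mapP; exists j; rewrite ?mem_enum.
Qed.

Lemma card_le5 k (ty : 'I_k -> nat) : injective ty -> (forall j, (ty j < 5)%N) -> (k <= 5)%N.
Proof.
move=> hinj hty.
have := @uniq_leq_size _ [seq ty j | j <- enum 'I_k] (iota 0 5).
rewrite size_map size_enum_ord size_iota; apply.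
  by rewrite map_inj_uniq // enum_uniq.
by move=> m /mapP[j _ ->]; rewrite mem_iota add0n hty.
Qed.

Lemma onto5_inj (ty : 'I_5 -> nat) :
  (forall m, (m < 5)%N -> exists j, ty j = m) -> injective ty.
Proof.
move=> hh j1 j2 e; apply/eqP; apply: contraT => ne.
have hs : {subset iota 0 5 <= [seq ty j | j <- enum (predC1 j2)]}.
  move=> m; rewrite mem_iota add0n => /andP[_ hm].
  have [j hj] := hh m hm.
  apply/mapP; have [ej|nj] := eqVneq j j2.
    by exists j1; rewrite ?mem_enum ?inE // e -ej.
  by exists j; rewrite ?mem_enum ?inE.
have := uniq_leq_size (iota_uniq 0 5) hs.
by rewrite size_map -cardE cardC1 card_ord size_iota.
Qed.

Lemma sum_type_single k (ty : 'I_k -> nat) (f : 'I_k -> R) j0 : injective ty ->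
  \sum_j (if ty j == ty j0 then f j else 0) = f j0.
Proof.
move=> hi; rewrite (bigD1 j0) //= eqxx big1 ?addr0 // => j hj.
by rewrite ifF //; apply/negbTE; apply: contra hj => /eqP /hi ->.
Qed.

End Counting.

Section Independence.
Variable R : realType.

Lemma indep_of_minor m (u v : 'cV[R]_m) (r1 r2 : 'I_m) :
  u r1 0 * v r2 0 - u r2 0 * v r1 0 != 0 -> lin_indep2 u v.
Proof.
move=> hd a b /matrixP h.
have h1 := h r1 0; have h2 := h r2 0; rewrite !mxE in h1 h2.
have ea : a * (u r1 0 * v r2 0 - u r2 0 * v r1 0) = 0.
  have -> : a * (u r1 0 * v r2 0 - u r2 0 * v r1 0) =
     v r2 0 * (a * u r1 0 + b * v r1 0) - v r1 0 * (a * u r2 0 + b * v r2 0) by ring.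
  by rewrite h1 h2; ring.
have eb : b * (u r1 0 * v r2 0 - u r2 0 * v r1 0) = 0.
  have -> : b * (u r1 0 * v r2 0 - u r2 0 * v r1 0) =
     u r1 0 * (a * u r2 0 + b * v r2 0) - u r2 0 * (a * u r1 0 + b * v r1 0) by ring.
  by rewrite h1 h2; ring.
move/eqP: ea; rewrite mulf_eq0 (negbTE hd) orbF => /eqP ->.
by move/eqP: eb; rewrite mulf_eq0 (negbTE hd) orbF => /eqP ->.
Qed.

Lemma scaled_not_indep m (w : 'cV[R]_m) (a b : R) : ~ lin_indep2 (a *: w) (b *: w).
Proof.
move=> hind; have [a0|a0] := eqVneq a 0.
  have h : 1 *: (a *: w) + 0 *: (b *: w) = 0 by rewrite a0 !scale0r scaler0 addr0.
  by have [/eqP] := hind _ _ h; rewrite oner_eq0.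
have h : b *: (a *: w) + (- a) *: (b *: w) = 0.
  by rewrite !scalerA mulrC mulNr scaleNr subrr.
by have [_ /eqP] := hind _ _ h; rewrite oppr_eq0 (negbTE a0).
Qed.

(* Horn zeros of different types are independent: some row sees the first
   and misses the second. *)
Lemma row_separating t1 t2 : (t1 < 5)%N -> (t2 < 5)%N -> t1 != t2 ->
  exists2 r, r \in [:: t1; nxt2 t1] & r \notin [:: t2; nxt t2; nxt2 t2].
Proof.
case: t1 => [|[|[|[|[|t1]]]]] //; case: t2 => [|[|[|[|[|t2]]]]] // _ _ _;
 first [ by exists 0%N | by exists 1%N | by exists 2%N | by exists 3%N | by exists 4%N].
Qed.

Lemma hvec_end_pos t (a b : R) r : (t < 5)%N -> r \in [:: t; nxt2 t] -> 0 < a -> 0 < b ->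
  (r < 5)%N /\ 0 < hvec t a b r.
Proof.
move=> ht; rewrite !inE => /orP[] /eqP -> ha hb; first by rewrite hvec_first.
by case: t ht => [|[|[|[|[|t]]]]].
Qed.

Lemma hvec_cols_indep k (M : 'M[R]_(5, k)) (ty : 'I_k -> nat) (ca cb : 'I_k -> R) :
  (forall (i : 'I_5) j, M i j = hvec (ty j) (ca j) (cb j) i) ->
  (forall j, (ty j < 5)%N) -> (forall j, 0 < ca j /\ 0 < cb j) ->
  (forall j1 j2, j1 != j2 -> ty j1 = ty j2 -> ca j1 * cb j2 != ca j2 * cb j1) ->
  forall j1 j2, j1 != j2 -> lin_indep2 (col j1 M) (col j2 M).
Proof.
move=> hM hty hp hs j1 j2 hj.
have [e|ne] := eqVneq (ty j1) (ty j2).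
  apply: (@indep_of_minor _ _ _ (inord (ty j1)) (inord (nxt2 (ty j1)))).
  have [_ h2 _] := nxt_lt (hty j1).
  rewrite !mxE !hM !inordK // -e !hvec_first !hvec_last //.
  by rewrite subr_eq0 [cb j1 * _]mulrC; apply: hs.
have ne' : ty j2 != ty j1 by rewrite eq_sym.
have [r1 hr1 hn1] := row_separating (hty j1) (hty j2) ne.
have [r2 hr2 hn2] := row_separating (hty j2) (hty j1) ne'.
have [p1 p2] := hp j1; have [q1 q2] := hp j2.
have [lt1 g1] := hvec_end_pos (hty j1) hr1 p1 p2.
have [lt2 g2] := hvec_end_pos (hty j2) hr2 q1 q2.
apply: (@indep_of_minor _ _ _ (inord r1) (inord r2)).
rewrite !mxE !hM !inordK // (hvec_out _ _ hn1) (hvec_out _ _ hn2) mulr0 subr0.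
by apply: lt0r_neq0; apply: mulr_gt0.
Qed.

End Independence.

Section HornFactors.
Variable R : realType.

(* The 5x5 matrix whose m-th column is the Horn zero of type m with end
   values a and b; W^2 = hmx 1 1, and the minimal factors of A are
   hmx phi psi and hmx psi phi. *)
Definition hmx (a b : R) : 'M[R]_5 := \matrix_(i, m) hvec m a b i.

Lemma hmx_gram a b : hmx a b *m (hmx a b)^T =
  circ5 [:: a * a + (a + b) * (a + b) + b * b; (a + b) * (a + b);
            a * b; a * b; (a + b) * (a + b)].
Proof.
apply/matrixP => i l; rewrite !mxE !big_ord_recr big_ord0 /= !mxE.
case: i => [[|[|[|[|[|i]]]]] hi] //; case: l => [[|[|[|[|[|l]]]]] hl] //;
  rewrite /hvec /=; ring.
Qed.

Lemma hmx_cp a b : 0 < a -> 0 < b -> cp_factorization (hmx a b *m (hmx a b)^T) (hmx a b).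
Proof.
move=> ha hb; split=> //.
- by move=> i j; rewrite mxE; apply: hvec_ge0; apply: ltW.
- apply: (@hvec_cols_indep _ _ _ (fun j => nat_of_ord j) (fun _ => a) (fun _ => b)) => //.
  + by move=> i j; rewrite mxE.
  + by move=> j1 j2 ne /val_inj e; move: ne; rewrite e eqxx.
Qed.

Lemma W2_hmx : W5 R *m W5 R = hmx 1 1.
Proof.
apply/matrixP => i m; rewrite !mxE !big_ord_recr big_ord0 /= !mxE.
case: i => [[|[|[|[|[|i]]]]] hi] //; case: m => [[|[|[|[|[|m]]]]] hm] //;
  rewrite /hvec /=; ring.
Qed.

Lemma W2_cp : cp_factorization (circ5 [:: 6; 4; 1; 1; 4]) (W5 R *m W5 R).
Proof.
rewrite W2_hmx; suff -> : circ5 [:: 6; 4; 1; 1; 4] = hmx 1 1 *m (hmx 1 1)^T :> 'M[R]_5.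
  by apply: hmx_cp; apply: ltr01.
by rewrite hmx_gram; congr (circ5 [:: _; _; _; _; _]); lra.
Qed.

Lemma hvec_cols_perm (M : 'M[R]_5) (ty : 'I_5 -> nat) (a b : R) :
  (forall (i : 'I_5) j, M i j = hvec (ty j) a b i) -> injective ty ->
  (forall j, (ty j < 5)%N) -> exists s : 'S_5, M = col_perm s (hmx a b).
Proof.
move=> hM hinj hty.
have sinj : injective (fun j : 'I_5 => (inord (ty j) : 'I_5)).
  by move=> j1 j2 /(congr1 val) /=; rewrite !inordK //; apply: hinj.
exists (perm sinj); apply/matrixP => i j.
by rewrite [RHS]mxE permE mxE inordK // hM.
Qed.

End HornFactors.

Section UniqueFactorization.
Variable R : realType.
Variables (k : nat) (C : 'M[R]_(5, k)).

Definition hcol (t : nat) : 'cV[R]_5 := \col_(i < 5) hvec t 1 1 i.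

Definition mass_dd (m : nat) : R :=
  \sum_j (if col_type C j == m then (col_a C j - col_b C j) ^+ 2 else 0).

(* For A' = circ(6, 4, 1, 1, 4) every column of a nonnegative factor has
   equal end values: summing sum_(type m) (a - b)^2 = S_m - 2 P_m + T_m
   over m gives 10 - 10 = 0. *)
Lemma Aprime_cols_balanced : nonneg_mx C ->
  C *m C^T = circ5 [:: 2 * 4 - 2; 4; 1; 1; 4] -> forall j, col_a C j = col_b C j.
Proof.
move=> hnn hC; have [hty _ _ hmass] := factor_structure hnn hC.
have hD m : mass_dd m = mass_aa C m - 2 * mass_ab C m + mass_bb C m.
  rewrite /mass_dd /mass_aa /mass_ab /mass_bb mulr_sumr -sumrB -big_split /=.
  by apply: eq_bigr => j _; case: ifP => _; ring.
have hterm m j : 0 <= (if col_type C j == m then (col_a C j - col_b C j) ^+ 2 else 0).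
  by case: ifP => _ //; rewrite sqr_ge0.
have hD0 m : 0 <= mass_dd m by apply: sumr_ge0 => j _; apply: hterm.
have hDz m : (m < 5)%N -> mass_dd m = 0.
  have [P0 S0] := hmass 0%N isT; have [P1 S1] := hmass 1%N isT.
  have [P2 S2] := hmass 2%N isT; have [P3 S3] := hmass 3%N isT.
  have [P4 S4] := hmass 4%N isT.
  have := hD0 0%N; have := hD0 1%N; have := hD0 2%N; have := hD0 3%N; have := hD0 4%N.
  rewrite !hD => D4 D3 D2 D1 D0; move: S0 S1 S2 S3 S4; rewrite /prv /nxt /= => S0 S1 S2 S3 S4.
  by case: m => [|[|[|[|[|m]]]]] //= _; lra.
move=> j; have /eqP :=
  psumr_eq0P (fun i _ => hterm (col_type C j) i) (hDz _ (hty j)) (i := j) isT.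
by rewrite eqxx sqrf_eq0 subr_eq0 => /eqP.
Qed.

(* Hence a CP factorization of A' is W^2 up to a column permutation: the
   columns are multiples a_j (1, 2, 1) of the Horn zeros of their type,
   pairwise independence makes the types distinct, and P_m = a_j^2 = 1. *)
Lemma Aprime_unique :
  cp_factorization (circ5 [:: 6; 4; 1; 1; 4]) C -> cp_equiv (W5 R *m W5 R) C.
Proof.
case=> hnn hind hC.
have hC' : C *m C^T = circ5 [:: 2 * 4 - 2; 4; 1; 1; 4].
  by rewrite -hC; congr (circ5 [:: _; _; _; _; _]); lra.
have [hty hx hab hmass] := factor_structure hnn hC'.
have hbal := Aprime_cols_balanced hnn hC'.
have hCe (i : 'I_5) j : C i j = col_a C j * hvec (col_type C j) 1 1 i.
  by rewrite -colxE hx // -hbal -hvec_scale !mulr1.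
have hinj : injective (col_type C).
  have cE j : col j C = col_a C j *: hcol (col_type C j).
    by apply/matrixP => i z; rewrite !mxE hCe.
  move=> j1 j2 e; have [//|ne] := eqVneq j1 j2; exfalso.
  apply: (@scaled_not_indep _ _ (hcol (col_type C j1)) (col_a C j1) (col_a C j2)).
  by rewrite -cE e -cE; apply: hind.
have ha1 j : col_a C j = 1.
  have := (hmass _ (hty j)).1; rewrite /mass_ab sum_type_single // -hbal => h.
  by have := (hab j).1; move: h; nra.
have k5 : k = 5%N.
  apply/eqP; rewrite eqn_leq (card_le5 hinj hty).
  by apply: (card_ge5 (ty := col_type C)) => m hm; apply: type_occurs; case: (hmass m hm).
subst k.
have [s hs] : exists s : 'S_5, C = col_perm s (hmx 1 1).
  by apply: (hvec_cols_perm (ty := col_type C)) => // i j; rewrite hCe ha1 mul1r.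
by exists erefl, s^-1%g; rewrite castmx_id W2_hmx hs col_permE.
Qed.

End UniqueFactorization.

Section MinimalFactorizations.
Variable R : realType.

Notation A := (circ5 [:: 8; 5; 1; 1; 5] : 'M[R]_5).

Lemma A_normal_form : A = circ5 [:: 2 * 5 - 2; 5; 1; 1; 5].
Proof. by congr (circ5 [:: _; _; _; _; _]); lra. Qed.

(* Every type occurs among the columns of a factor of A, so cp-rank A >= 5. *)
Lemma A_cprank_ge5 k (B : 'M[R]_(5, k)) : nonneg_mx B -> A = B *m B^T -> (5 <= k)%N.
Proof.
move=> hnn hB; rewrite A_normal_form in hB.
have [_ _ _ hmass] := factor_structure hnn (esym hB).
by apply: (card_ge5 (ty := col_type B)) => m hm; apply: type_occurs; case: (hmass m hm).
Qed.

(* In a factor of A with 5 columns each type occurs exactly once, and the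
   end values (a_m, b_m) of the column of type m solve the cyclic system
   a_m b_m = 1, a_(m+1)^2 + b_m^2 = 3; hence they do not depend on m. *)
Lemma A_factor5_const (B : 'M[R]_5) : nonneg_mx B -> B *m B^T = A ->
  exists a b : R, [/\ 0 <= a, 0 <= b, a * b = 1, a ^+ 2 + b ^+ 2 = 3 &
    forall j, col_a B j = a /\ col_b B j = b].
Proof.
move=> hnn; rewrite A_normal_form => hB.
have [hty _ hab hmass] := factor_structure hnn hB.
have hocc m : (m < 5)%N -> exists j, col_type B j = m.
  by move=> hm; apply: type_occurs; case: (hmass m hm).
have hinj := onto5_inj hocc.
pose jm (m : nat) : 'I_5 := odflt ord0 [pick j | col_type B j == m].
have hjm m : (m < 5)%N -> col_type B (jm m) = m.
  move=> hm; rewrite /jm; case: pickP => [j /eqP //|hn].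
  by have [j hj] := hocc m hm; move: (hn j); rewrite hj eqxx.
pose a m := col_a B (jm m); pose b m := col_b B (jm m).
have hsum (f : 'I_5 -> R) m : (m < 5)%N ->
    \sum_j (if col_type B j == m then f j else 0) = f (jm m).
  by move=> hm; rewrite -{1}(hjm m hm) sum_type_single.
have hp i : (i < 5)%N -> [/\ 0 <= a i, 0 <= b i & a i * b i = 1].
  move=> hi; have [h _] := hmass i hi; move: h; rewrite /mass_ab hsum // => h.
  by split=> //; case: (hab (jm i)).
have hr i : (i < 5)%N -> a (nxt i) ^+ 2 + b i ^+ 2 = 3.
  move=> hi; have [h1 _ _] := nxt_lt hi.
  have prv_nxt : prv (nxt i) = i by case: i hi {h1} => [|[|[|[|[|i]]]]].
  have [_] := hmass _ h1; rewrite prv_nxt /mass_aa /mass_bb !hsum // /a /b; lra.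
have hc := cyclic_system_const hp hr.
have [p1 p2 p3] := hp 0%N isT.
exists (a 0%N), (b 0%N); split=> //.
  by have := hr 0%N isT; have [-> _] := hc (nxt 0) isT.
move=> j; have e : jm (col_type B j) = j by apply: hinj; rewrite hjm.
by have [<- <-] := hc _ (hty j); rewrite /a /b e.
Qed.

Lemma A_factor5 (B : 'M[R]_5) : nonneg_mx B -> B *m B^T = A ->
  exists a b : R, [/\ 0 <= a, 0 <= b, a * b = 1, a ^+ 2 + b ^+ 2 = 3 &
    exists s : 'S_5, B = col_perm s (hmx a b)].
Proof.
move=> hnn hB; have [a [b [ha hb e s hcol]]] := A_factor5_const hnn hB.
exists a, b; split=> //.
have hB' : B *m B^T = circ5 [:: 2 * 5 - 2; 5; 1; 1; 5] by rewrite hB A_normal_form.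
have [hty hx _ hmass] := factor_structure hnn hB'.
have hocc m : (m < 5)%N -> exists j, col_type B j = m.
  by move=> hm; apply: type_occurs; case: (hmass m hm).
apply: (hvec_cols_perm (ty := col_type B)) (onto5_inj hocc) hty => i j.
by rewrite -colxE hx //; have [-> ->] := hcol j.
Qed.

Definition F1 : 'M[R]_5 := hmx (phi R) (psi R).
Definition F2 : 'M[R]_5 := hmx (psi R) (phi R).

Lemma golden_factor_min (a b : R) : 0 < a -> 0 < b -> a * b = 1 -> a ^+ 2 + b ^+ 2 = 3 ->
  minimal_cp_factorization A (hmx a b).
Proof.
move=> ha hb e s; split; last by move=> k B hnn hB; apply: A_cprank_ge5 hnn hB.
suff -> : A = hmx a b *m (hmx a b)^T by apply: hmx_cp.
rewrite hmx_gram; move: s; rewrite expr2 => s.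
by congr (circ5 [:: _; _; _; _; _]); rewrite ?e; lra.
Qed.

Lemma F1_min : minimal_cp_factorization A F1.
Proof. by have [e s p1 p2 _] := @golden_facts R; apply: golden_factor_min. Qed.

Lemma F2_min : minimal_cp_factorization A F2.
Proof.
have [e s p1 p2 _] := @golden_facts R.
by apply: golden_factor_min => //; [rewrite mulrC | rewrite addrC].
Qed.

(* F1 and F2 differ by more than a column permutation: the first entries of
   the columns of F1 are phi or 0, while the first column of F2 starts with
   psi. *)
Lemma F1_F2_distinct : ~ cp_equiv F1 F2.
Proof.
case=> e [s]; rewrite castmx_id -[s]invgK -col_permE => /matrixP h.
have h0 := h (@Ordinal 5 0 isT) ord0; have h1 := h (@Ordinal 5 1 isT) ord0.
move: h0 h1; rewrite !mxE.
have [_ _ p1 p2 d] := @golden_facts R.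
by case: (s^-1%g ord0) => [[|[|[|[|[|t]]]]] ht] //=; rewrite /hvec /=; lra.
Qed.

Lemma A_min_classification k (B : 'M[R]_(5, k)) :
  minimal_cp_factorization A B -> cp_equiv B F1 \/ cp_equiv B F2.
Proof.
case=> -[hnn _ hB] hmin.
have [f1nn _ f1e] := F1_min.1.
have ek : k = 5%N by apply/eqP; rewrite eqn_leq (hmin _ _ f1nn f1e) (A_cprank_ge5 hnn hB).
subst k.
have [a [b [ha hb e s [sg hsg]]]] := A_factor5 hnn (esym hB).
have hBF : hmx a b = B *m perm_mx sg.
  by rewrite hsg col_permE -mulmxA -perm_mxM mulVg perm_mx1 mulmx1.
by case: (golden_pair_cases ha hb e s) => -[ea eb]; [left|right];
  exists erefl, sg; rewrite castmx_id -hBF ea eb.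
Qed.

End MinimalFactorizations.

Section InfinitelyMany.
Variable R : realType.

Notation A := (circ5 [:: 8; 5; 1; 1; 5] : 'M[R]_5).

(* Mixing the two minimal factorizations: for u^2 + v^2 = 1,
   [u F1, v F2] [u F1, v F2]^T = u^2 F1 F1^T + v^2 F2 F2^T = A. *)
Definition mixed_factor (u v : R) : 'M[R]_(5, 5 + 5) := row_mx (u *: F1 R) (v *: F2 R).

Definition mixed_type (j : 'I_(5 + 5)) : nat :=
  match split j with inl m => nat_of_ord m | inr m => nat_of_ord m end.
Definition mixed_a (u v : R) (j : 'I_(5 + 5)) : R :=
  match split j with inl _ => u * phi R | inr _ => v * psi R end.
Definition mixed_b (u v : R) (j : 'I_(5 + 5)) : R :=
  match split j with inl _ => u * psi R | inr _ => v * phi R end.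

Lemma mixed_factor_entry u v (i : 'I_5) j :
  mixed_factor u v i j = hvec (mixed_type j) (mixed_a u v j) (mixed_b u v j) i.
Proof.
by rewrite /mixed_factor /mixed_type /mixed_a /mixed_b mxE; case: (split j) => m;
  rewrite !mxE hvec_scale.
Qed.

Lemma mixed_factor_cp (u v : R) : 0 < u -> 0 < v -> u ^+ 2 + v ^+ 2 = 1 ->
  cp_factorization A (mixed_factor u v).
Proof.
move=> hu hv huv.
have [e s p1 p2 d] := @golden_facts R.
split.
- move=> i j; rewrite mixed_factor_entry /mixed_a /mixed_b.
  by case: (split j) => m; apply: hvec_ge0; apply: mulr_ge0; apply: ltW.
- apply: (@hvec_cols_indep _ _ _ mixed_type (mixed_a u v) (mixed_b u v)).
  + by move=> i j; rewrite mixed_factor_entry.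
  + by move=> j; rewrite /mixed_type; case: (split j) => m; apply: ltn_ord.
  + by move=> j; rewrite /mixed_a /mixed_b; case: (split j) => m; split; apply: mulr_gt0.
  + (* two columns of equal type come from different blocks, and
       phi^2 - psi^2 = (phi - psi)(phi + psi) != 0 *)
    have hne : u * v * (phi R ^+ 2 - psi R ^+ 2) != 0.
      rewrite subr_sqr d mul1r; apply: lt0r_neq0.
      by apply: mulr_gt0; [apply: mulr_gt0 | apply: addr_gt0].
    move=> j1 j2 ne; rewrite /mixed_type /mixed_a /mixed_b.
    have k1 := splitK j1; have k2 := splitK j2.
    case: (split j1) k1 => m1 k1; case: (split j2) k2 => m2 k2 /val_inj em;
      subst m2; rewrite -?k1 -?k2 ?eqxx // in ne; rewrite -subr_eq0.
    * by apply: contra hne => /eqP h; apply/eqP; rewrite -h; ring.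
    * by apply: contra hne => /eqP h; rewrite -oppr_eq0 -h; apply/eqP; ring.
- have [_ _ hF1] := (F1_min R).1; have [_ _ hF2] := (F2_min R).1.
  rewrite /mixed_factor tr_row_mx mul_row_col !linearZ /= -!scalemxAl !scalerA.
  by rewrite -hF1 -hF2 -scalerDl -!expr2 huv scale1r.
Qed.

(* A quantity invariant under column permutations:
   the sum over the columns of (C_0j C_2j)^2. *)
Definition inv02 n (C : 'M[R]_(5, n)) : R :=
  \sum_j (C (@Ordinal 5 0 isT) j * C (@Ordinal 5 2 isT) j) ^+ 2.

Lemma inv02_perm n (C : 'M[R]_(5, n)) (s : 'S_n) : inv02 (C *m perm_mx s) = inv02 C.
Proof.
rewrite -[s]invgK -col_permE /inv02.
under eq_bigr do rewrite !mxE.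
by apply/esym/reindex_inj/perm_inj.
Qed.

(* Rows 0 and 2 meet only in the columns of type 0, where the product is
   u^2 phi psi = u^2, resp. v^2 psi phi = v^2. *)
Lemma inv02_mixed u v : inv02 (mixed_factor u v) = (u ^+ 2) ^+ 2 + (v ^+ 2) ^+ 2.
Proof.
have [e _ _ _ _] := @golden_facts R.
rewrite /inv02 big_split_ord /= /mixed_factor.
under eq_bigr do rewrite !row_mxEl.
under [X in _ + X = _]eq_bigr do rewrite !row_mxEr.
rewrite !big_ord_recr !big_ord0 /= !mxE /hvec /=.
transitivity ((u ^+ 2) ^+ 2 * (phi R * psi R) ^+ 2 + (v ^+ 2) ^+ 2 * (phi R * psi R) ^+ 2).
  by ring.
by rewrite e expr1n !mulr1.
Qed.

Definition weight (m : nat) : R := ((m + 3)%:R)^-1.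

Lemma weight_bounds m : 0 < weight m /\ weight m <= 1/3.
Proof.
have hn : (3 : R) <= (m + 3)%:R by rewrite natrD; have := ler0n R m; lra.
have e : weight m * (m + 3)%:R = 1 by rewrite /weight mulVf //; apply: lt0r_neq0; lra.
have p : 0 < weight m by rewrite /weight invr_gt0; lra.
by split=> //; nra.
Qed.

Definition mixed_family (m : nat) : fact_of R 5 :=
  existT _ (5 + 5)%N (mixed_factor (Num.sqrt (weight m)) (Num.sqrt (1 - weight m))).

Lemma mixed_family_cp m : cp_factorization A (projT2 (mixed_family m)).
Proof.
have [p q] := weight_bounds m.
apply: mixed_factor_cp; rewrite ?sqrtr_gt0 ?sqr_sqrtr; lra.
Qed.

(* The invariant w^2 + (1 - w)^2 separates the weights, which lie in
   (0, 1/2); so the factorizations of the family are pairwise distinct. *)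
Lemma mixed_family_distinct m1 m2 : m1 <> m2 -> ~ fequiv (mixed_family m1) (mixed_family m2).
Proof.
move=> ne [e [s h]]; move: (congr1 (@inv02 _) h).
rewrite castmx_id inv02_perm !inv02_mixed.
have [p1 q1] := weight_bounds m1; have [p2 q2] := weight_bounds m2.
rewrite !sqr_sqrtr; try lra.
move=> hw; have ew : weight m1 = weight m2.
  have : (weight m1 - weight m2) * (weight m1 + weight m2 - 1) = 0.
    by move: hw; rewrite !expr2 => hw; lra.
  by move/eqP; rewrite mulf_eq0 => /orP[/eqP|/eqP] h'; lra.
apply: ne; move: ew; rewrite /weight => /invr_inj /eqP.
by rewrite eqr_nat eqn_add2r => /eqP.
Qed.

End InfinitelyMany.

Theorem mainTheorem10 (R : realType) :
  let A : 'M[R]_5 := circ5 [:: 8; 5; 1; 1; 5] in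
  let A' : 'M[R]_5 := circ5 [:: 6; 4; 1; 1; 4] in
  let W2 : 'M[R]_5 := W5 R *m W5 R in
  (* A *)
  [/\ completely_positive A,
      (* exactly two minimal CP factorizations (up to column permutation) *)
      (exists F1 F2 : fact_of R 5,
         [/\ minimal_cp_factorization A (projT2 F1),
             minimal_cp_factorization A (projT2 F2),
             ~ fequiv F1 F2
           & forall G : fact_of R 5, minimal_cp_factorization A (projT2 G) ->
               fequiv G F1 \/ fequiv G F2]),
      (* infinitely many CP factorizations (pairwise distinct) *)
      (exists f : nat -> fact_of R 5,
         (forall m, cp_factorization A (projT2 (f m))) /\
         (forall m1 m2, m1 <> m2 -> ~ fequiv (f m1) (f m2))),
      (* A' *)
      completely_positive A'
    & (* unique CP factorization A' = W^2 (W^2)^T *)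
      cp_factorization A' W2 /\
      (forall k (C : 'M[R]_(5, k)), cp_factorization A' C -> cp_equiv W2 C)].
Proof.
move=> A A' W2.
split.
- by have [[f1nn _ f1e] _] := F1_min R; exists 5%N, (F1 R).
- exists (existT _ 5%N (F1 R)), (existT _ 5%N (F2 R)); split.
  + exact: F1_min.
  + exact: F2_min.
  + exact: F1_F2_distinct.
  + by move=> [k B] /A_min_classification.
- exists (mixed_family R); split; [exact: mixed_family_cp | exact: mixed_family_distinct].
- by have [w2nn _ w2e] := W2_cp R; exists 5%N, W2.
- by split; [exact: W2_cp | move=> k C; exact: Aprime_unique].
Qed.
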